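(* Let $0<q<1$, $n,m\in\mathbb{N}_0$, and let $x,y$ be complex with $y\neq0$. Then $${}_2\Phi_1\left[\begin{matrix}q^{-n},x;\\ y;\end{matrix}\;q;\,q^{1+m}\right]=\frac{x^n\left(\frac{y}{x};q\right)_n}{(y;q)_n}\sum_{j=0}^m\begin{bmatrix}m\\ j\end{bmatrix}_q\frac{\left(\frac{q^{1-n}}{y},\frac{qx}{y};q\right)_{m-j}}{\left(\frac{xq^{1-n}}{y};q\right)_{m-j}}\left(\frac{q}{y}\right)^j.$$
   Context: Throughout $0<q<1$. For complex $\alpha$: $(\alpha;q)_0=1$, $(\alpha;q)_n=\prod_{k=0}^{n-1}(1-\alpha q^k)$, $(\alpha_1,\dots,\alpha_m;q)_n=(\alpha_1;q)_n\cdots(\alpha_m;q)_n$. The $q$-binomial coefficient is $\begin{bmatrix}m\\ j\end{bmatrix}_q=\frac{(q;q)_m}{(q;q)_j(q;q)_{m-j}}$. Also ${}_2\Phi_1\left[\begin{matrix}a_1,a_2;\\ b_1;\end{matrix}\,q;z\right]=\sum_{k=0}^\infty\frac{(a_1,a_2;q)_k}{(b_1;q)_k}\frac{z^k}{(q;q)_k}$ (terminating when $a_1=q^{-n}$). *)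

From HB Require Import structures.
From mathcomp Require Import all_boot all_order all_algebra.
From mathcomp Require Import complex.
From mathcomp Require Import reals.
Set Implicit Arguments. Unset Strict Implicit. Unset Printing Implicit Defensive.
Import Order.TTheory GRing.Theory Num.Theory.
Local Open Scope ring_scope.

Definition qpoch {F : comRingType} (a q : F) (n : nat) : F :=
  \prod_(k < n) (1 - a * q ^+ k).

Definition qbinom {F : fieldType} (q : F) (m j : nat) : F :=
  qpoch q q m / (qpoch q q j * qpoch q q (m - j)).

(* Terminating basic hypergeometric series
   2Phi1[q^{-n}, a2; b1; q; z] = sum_{k=0}^{n} (q^{-n},a2;q)_k/(b1;q)_k z^k/(q;q)_k
   (terms with k > n vanish since (q^{-n};q)_k = 0). *)
Definition phi21_term {F : fieldType} (n : nat) (a2 b1 q z : F) : F :=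
  \sum_(k < n.+1)
     qpoch (q ^+ n)^-1 q k * qpoch a2 q k / qpoch b1 q k * z ^+ k / qpoch q q k.

(* Multiplying by (y;q)_n turns the left side into
   S(y, z) = sum_k (q^-n;q)_k / (q;q)_k * (x;q)_k * (y q^k;q)_(n-k) * z^k at z = q^(m+1).
   At z = q this is the q-Chu-Vandermonde sum prod_(i<n) (x - y q^i), obtained by
   induction on n.  Replacing z by q z obeys the contiguity relation
   y S(y q, q z) = S(y q, z) - (1 - y q^n) S(y, z), while the q-Pascal rule gives the
   same recurrence in m for the right-hand sum, with its parameters multiplied by q when
   y is divided by q; induction on m concludes. *)

From HB Require Import structures.
From mathcomp Require Import all_boot all_order all_algebra.
From mathcomp Require Import complex.
From mathcomp Require Import reals.
From mathcomp Require Import ring.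
Set Implicit Arguments. Unset Strict Implicit. Unset Printing Implicit Defensive.
Import Order.TTheory GRing.Theory Num.Theory.
Local Open Scope ring_scope.

Section QPochhammer.
Variables (F : comNzRingType) (q : F).

Lemma qpoch0 a : qpoch a q 0 = 1.
Proof. by rewrite /qpoch big_ord0. Qed.

Lemma qpochS a n : qpoch a q n.+1 = qpoch a q n * (1 - a * q ^+ n).
Proof. by rewrite /qpoch big_ord_recr. Qed.

Lemma qpochSl a n : qpoch a q n.+1 = (1 - a) * qpoch (a * q) q n.
Proof.
rewrite /qpoch big_ord_recl expr0 mulr1; congr (_ * _).
by apply: eq_bigr => i _; rewrite /= exprS mulrA.
Qed.

Lemma qpochD a m n : qpoch a q (m + n) = qpoch a q m * qpoch (a * q ^+ m) q n.
Proof.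
rewrite /qpoch big_split_ord; congr (_ * _).
by apply: eq_bigr => i _; rewrite /= exprD mulrA.
Qed.

Definition hqpoch (x y : F) n := \prod_(i < n) (x - y * q ^+ i).

Lemma hqpochS x y n : hqpoch x y n.+1 = hqpoch x y n * (x - y * q ^+ n).
Proof. by rewrite /hqpoch big_ord_recr. Qed.

Lemma hqpochSl x y n : hqpoch x y n.+1 = (x - y) * hqpoch x (y * q) n.
Proof.
rewrite /hqpoch big_ord_recl expr0 mulr1; congr (_ * _).
by apply: eq_bigr => i _; rewrite /= exprS mulrA.
Qed.

Lemma hqpochZ c x y n : hqpoch (c * x) (c * y) n = c ^+ n * hqpoch x y n.
Proof.
rewrite /hqpoch -[in c ^+ n](card_ord n) -prodr_const -big_split /=.
by apply: eq_bigr => i _; rewrite mulrBr mulrA.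
Qed.

End QPochhammer.

Lemma hqpochE (F : fieldType) (q x y : F) n :
  x != 0 -> hqpoch q x y n = x ^+ n * qpoch (y / x) q n.
Proof.
move=> x_nz; rewrite -[in LHS](mulr1 x) -[in LHS](divfK x_nz y) [_ / x * x]mulrC.
by rewrite hqpochZ.
Qed.

Section QNotRootOfUnity.
Variables (F : fieldType) (q : F).
Hypotheses (q_neq0 : q != 0) (q_not_root1 : forall k, q ^+ k.+1 != 1).

Lemma subr1_qX_neq0 k : 1 - q ^+ k.+1 != 0.
Proof. by rewrite subr_eq0 eq_sym q_not_root1. Qed.

Lemma qpoch_qq_neq0 k : qpoch q q k != 0.
Proof.
elim: k => [|k IHk]; first by rewrite qpoch0 oner_eq0.
by rewrite qpochS mulf_neq0 // -exprS subr1_qX_neq0.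
Qed.

Lemma qbinom_n0 m : qbinom q m 0 = 1.
Proof. by rewrite /qbinom qpoch0 mul1r subn0 divff // qpoch_qq_neq0. Qed.

Lemma qbinom_nn m : qbinom q m m = 1.
Proof. by rewrite /qbinom subnn qpoch0 mulr1 divff // qpoch_qq_neq0. Qed.

Lemma qbinom_pascal m j : (j < m)%N ->
  qbinom q m.+1 j.+1 = q ^+ j.+1 * qbinom q m j.+1 + qbinom q m j.
Proof.
move=> ltjm; rewrite /qbinom subSS -(subnSK ltjm); set d := (m - j.+1)%N.
have em : q * q ^+ m = q ^+ j.+1 * (q * q ^+ d).
  by rewrite -!exprS -exprD addnS /d subnKC.
rewrite !(qpochS q q m, qpochS q q j, qpochS q q d) em.
have [nz_j nz_d] := (subr1_qX_neq0 j, subr1_qX_neq0 d).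
have [qq_j qq_d] := (qpoch_qq_neq0 j, qpoch_qq_neq0 d).
rewrite -!exprS in nz_j nz_d *.
by field; rewrite qq_j qq_d nz_j nz_d.
Qed.

Definition qpoch_ratio A B C i := qpoch A q i * qpoch B q i / qpoch C q i.

Lemma qpoch_ratioS A B C i :
  qpoch_ratio A B C i.+1
  = (1 - A) * (1 - B) / (1 - C) * qpoch_ratio (A * q) (B * q) (C * q) i.
Proof. by rewrite /qpoch_ratio !qpochSl invfM; ring. Qed.

Definition qbinom_series A B C z m :=
  \sum_(j < m.+1) qbinom q m j * qpoch_ratio A B C (m - j) * z ^+ j.

Lemma qbinom_seriesS A B C z m :
  qbinom_series A B C z m.+1
  = z * qbinom_series A B C z m
    + (1 - A) * (1 - B) / (1 - C) * qbinom_series (A * q) (B * q) (C * q) (q * z) m.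
Proof.
pose t j := qpoch_ratio A B C (m - j) * z ^+ j.+1.
have lhs : qbinom_series A B C z m.+1 = qpoch_ratio A B C m.+1
    + \sum_(j < m) qbinom q m.+1 j.+1 * t j + qpoch_ratio A B C 0 * z ^+ m.+1.
  rewrite /qbinom_series big_ord_recl big_ord_recr /= qbinom_n0 qbinom_nn.
  rewrite subn0 subnn expr0 !mulr1 !mul1r addrA.
  congr (_ + _ + _); apply: eq_bigr => j _.
  by rewrite /t [RHS]mulrA /bump leq0n add1n subSS.
have shifted : z * qbinom_series A B C z m
    = \sum_(j < m) qbinom q m j * t j + qpoch_ratio A B C 0 * z ^+ m.+1.
  rewrite /qbinom_series mulr_sumr big_ord_recr /= qbinom_nn subnn mul1r exprS.
  congr (_ + _); last exact: mulrCA.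
  by apply: eq_bigr => j _; rewrite /t exprS mulrCA [RHS]mulrA.
have raised : (1 - A) * (1 - B) / (1 - C) * qbinom_series (A * q) (B * q) (C * q) (q * z) m
    = qpoch_ratio A B C m.+1 + \sum_(j < m) q ^+ j.+1 * qbinom q m j.+1 * t j.
  rewrite /qbinom_series mulr_sumr big_ord_recl /= qbinom_n0 subn0 expr0 mulr1.
  rewrite qpoch_ratioS mul1r; congr (_ + _); apply: eq_bigr => j _.
  rewrite /t /bump leq0n add1n -(subnSK (ltn_ord j)) qpoch_ratioS exprMn.
  by ring.
have pascal : \sum_(j < m) qbinom q m.+1 j.+1 * t j
    = \sum_(j < m) qbinom q m j * t j + \sum_(j < m) q ^+ j.+1 * qbinom q m j.+1 * t j.
  rewrite -big_split; apply: eq_bigr => j _ /=.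
  by rewrite qbinom_pascal // -mulrDl addrC.
by rewrite lhs shifted raised pascal; ring.
Qed.

(* (q^-n;q)_k / (q;q)_k = (-1)^k q^(k(k-1)/2 - n k) [n k]_q *)
Definition qbinomN n k := qpoch (q ^+ n)^-1 q k / qpoch q q k.

Lemma qbinomN_n0 n : qbinomN n 0 = 1.
Proof. by rewrite /qbinomN !qpoch0 divr1. Qed.

Lemma qbinomN_out n : qbinomN n n.+1 = 0.
Proof. by rewrite /qbinomN qpochS mulVf ?expf_neq0 // subrr mulr0 mul0r. Qed.

Lemma qbinomN_SS n k :
  qbinomN n.+1 k.+1 = qbinomN n k.+1 - (q ^+ n.+1)^-1 * qbinomN n k.
Proof.
rewrite /qbinomN exprSr invfM qpochSl divfK // !qpochS.
have [nz_k qq_k] := (subr1_qX_neq0 k, qpoch_qq_neq0 k).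
rewrite exprS in nz_k.
by field; rewrite qq_k q_neq0 expf_neq0 // nz_k.
Qed.

Definition phi21_num n x y z :=
  \sum_(k < n.+1) qbinomN n k * qpoch x q k * qpoch (y * q ^+ k) q (n - k) * z ^+ k.

Lemma phi21_termE n x y z :
  qpoch y q n != 0 -> phi21_term n x y q z = phi21_num n x y z / qpoch y q n.
Proof.
move=> y_nz; rewrite /phi21_term /phi21_num mulr_suml; apply: eq_bigr => k _.
have le_kn : (k <= n)%N by rewrite -ltnS.
have yE : qpoch y q n = qpoch y q k * qpoch (y * q ^+ k) q (n - k).
  by rewrite -qpochD subnKC.
move: (y_nz); rewrite yE mulf_eq0 negb_or => /andP[y_nz1 y_nz2].
have qq_k := qpoch_qq_neq0 k.
by rewrite /qbinomN; field; rewrite y_nz1 y_nz2 qq_k.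
Qed.

Lemma phi21_num_recn n x y z :
  phi21_num n.+1 x y z = (1 - y * q ^+ n) * phi21_num n x y z
                         - z / q ^+ n.+1 * (1 - x) * phi21_num n (x * q) (y * q) z.
Proof.
pose t k := qpoch x q k.+1 * qpoch (y * q ^+ k.+1) q (n - k) * z ^+ k.+1.
have shifted : phi21_num n.+1 x y z = qpoch y q n.+1
    + \sum_(k < n.+1) (qbinomN n k.+1 * t k - (q ^+ n.+1)^-1 * qbinomN n k * t k).
  rewrite /phi21_num big_ord_recl /= qbinomN_n0 qpoch0 expr0 !mulr1 mul1r subn0.
  by congr (_ + _); apply: eq_bigr => k _; rewrite qbinomN_SS subSS /t; ring.
have top : qpoch y q n.+1 + \sum_(k < n.+1) qbinomN n k.+1 * t k
         = (1 - y * q ^+ n) * phi21_num n x y z.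
  rewrite /phi21_num mulr_sumr [RHS]big_ord_recl [in LHS]big_ord_recr /=.
  rewrite qbinomN_out !mul0r addr0 qbinomN_n0 qpoch0 subn0 expr0 !mulr1 mul1r.
  congr (_ + _); first by rewrite qpochS mulrC.
  apply: eq_bigr => k _; have lt_kn := ltn_ord k.
  rewrite /t /bump leq0n add1n -(subnSK lt_kn) (qpochS q (y * _)).
  by rewrite -[y * _ * _]mulrA -exprD subnKC //; ring.
have bottom : \sum_(k < n.+1) (q ^+ n.+1)^-1 * qbinomN n k * t k
            = z / q ^+ n.+1 * (1 - x) * phi21_num n (x * q) (y * q) z.
  rewrite /phi21_num mulr_sumr; apply: eq_bigr => k _.
  by rewrite /t qpochSl -[y * q * _]mulrA -exprS [z ^+ _.+1]exprS; ring.
by rewrite shifted big_split /= sumrN addrA top bottom.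
Qed.

Lemma qchu_vandermonde n x y : phi21_num n x y q = hqpoch q x y n.
Proof.
elim: n x y => [|n IHn] x y.
  by rewrite /phi21_num /hqpoch big_ord1 big_ord0 qbinomN_n0 !qpoch0 expr0 !mulr1.
rewrite phi21_num_recn !IHn -[x * q]mulrC -[y * q]mulrC hqpochZ hqpochS.
by rewrite exprS; field; rewrite expf_neq0 // q_neq0.
Qed.

Lemma phi21_num_mulz n x y z :
  y * phi21_num n x (y * q) (q * z)
  = phi21_num n x (y * q) z - (1 - y * q ^+ n) * phi21_num n x y z.
Proof.
rewrite /phi21_num !mulr_sumr -sumrB; apply: eq_bigr => k _.
have le_kn : (k <= n)%N by rewrite -ltnS.
set c := qbinomN n k * qpoch x q k.
set Pk := qpoch (y * q ^+ k) q (n - k).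
set Pk1 := qpoch (y * q * q ^+ k) q (n - k).
have step : Pk * (1 - y * q ^+ n) = (1 - y * q ^+ k) * Pk1.
  have -> : y * q ^+ n = y * q ^+ k * q ^+ (n - k) by rewrite -mulrA -exprD subnKC.
  by rewrite -qpochS qpochSl mulrAC.
have -> : (1 - y * q ^+ n) * (c * Pk * z ^+ k) = c * z ^+ k * (Pk * (1 - y * q ^+ n)).
  by ring.
by rewrite step exprMn; ring.
Qed.

Lemma hqpoch_shift_coef n x b : b != 0 -> q ^+ n * b - x != 0 ->
  hqpoch q x (b * q) n *
    ((1 - q / q ^+ n / (b * q)) * (1 - q * x / (b * q)) / (1 - x * (q / q ^+ n) / (b * q)))
  = - ((1 - b * q ^+ n) / b) * hqpoch q x b n.
Proof.
move=> b_nz C_den; have qn_nz : q ^+ n != 0 by rewrite expf_neq0.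
have hqpochSS : hqpoch q x (b * q) n * (x - b) = hqpoch q x b n * (x - b * q ^+ n).
  by rewrite mulrC -hqpochSl hqpochS.
have -> : hqpoch q x (b * q) n *
    ((1 - q / q ^+ n / (b * q)) * (1 - q * x / (b * q)) / (1 - x * (q / q ^+ n) / (b * q)))
    = - (hqpoch q x (b * q) n * (x - b)) * (1 - q / q ^+ n / (b * q))
      / (b * (1 - x * (q / q ^+ n) / (b * q))).
  by field; rewrite q_neq0 b_nz qn_nz C_den.
by rewrite hqpochSS; field; rewrite b_nz q_neq0 qn_nz C_den.
Qed.

Lemma phi21_num_qpow n x y m : y != 0 ->
  (forall k, (k <= m)%N -> qpoch (x * (q / q ^+ n) / y) q k != 0) ->
  phi21_num n x y (q ^+ m.+1) = hqpoch q x y n *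
    qbinom_series (q / q ^+ n / y) (q * x / y) (x * (q / q ^+ n) / y) (q / y) m.
Proof.
have qn_nz : q ^+ n != 0 by rewrite expf_neq0.
elim: m y => [|m IHm] y y_nz C_nz.
  rewrite qchu_vandermonde /qbinom_series big_ord1 qbinom_nn //.
  by rewrite /qpoch_ratio !qpoch0 expr0 invr1 !mulr1.
(* Writing y = b q, the contiguity relation links y to b, where the induction
   hypothesis applies as well, with all parameters of the series multiplied by q. *)
have [b yE] : exists b, y = b * q by exists (y / q); rewrite divfK.
subst y; have b_nz : b != 0 by move: y_nz; rewrite mulf_eq0 negb_or => /andP[].
have C_den : q ^+ n * b - x != 0.
  move: (C_nz 1%N isT); rewrite qpochS qpoch0 mul1r expr0 mulr1.
  have -> : 1 - x * (q / q ^+ n) / (b * q) = (q ^+ n * b - x) / (q ^+ n * b).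
    by field; rewrite q_neq0 b_nz qn_nz.
  by rewrite mulf_eq0 negb_or => /andP[].
have shift c : c / b = c / (b * q) * q by field; rewrite b_nz q_neq0.
have IHb : phi21_num n x b (q ^+ m.+1) = hqpoch q x b n *
    qbinom_series (q / q ^+ n / (b * q) * q) (q * x / (b * q) * q)
                  (x * (q / q ^+ n) / (b * q) * q) (q * (q / (b * q))) m.
  rewrite [q * (q / _)]mulrC -!shift; apply: IHm => // k le_km.
  by move: (C_nz k.+1 le_km); rewrite qpochSl shift mulf_eq0 negb_or => /andP[].
have contig := phi21_num_mulz n x b (q ^+ m.+1).
have IHy := IHm _ y_nz (fun k le_km => C_nz k (leqW le_km)).
rewrite -exprS IHb IHy in contig.
apply: (mulfI b_nz); rewrite contig qbinom_seriesS mulrDr.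
rewrite [hqpoch _ _ _ _ * (_ * qbinom_series (_ * q) _ _ _ _)]mulrA hqpoch_shift_coef //.
by field; rewrite b_nz q_neq0.
Qed.

End QNotRootOfUnity.

Local Open Scope complex_scope.

Theorem theorem5 (R : realType) (q : R) (n m : nat) (x y : R[i]) :
  0 < q -> q < 1 ->
  y != 0 ->
  (* side conditions making the right-hand side (and LHS) well-defined *)
  x != 0 ->
  qpoch y q%:C n != 0 ->
  (forall k, (k <= m)%N -> qpoch (x * q%:C ^ (1 - n%:Z) / y) q%:C k != 0) ->
  phi21_term n x y q%:C (q%:C ^+ m.+1) =
  x ^+ n * qpoch (y / x) q%:C n / qpoch y q%:C n *
  \sum_(j < m.+1)
     qbinom q%:C m j *
     (qpoch (q%:C ^ (1 - n%:Z) / y) q%:C (m - j) * qpoch (q%:C * x / y) q%:C (m - j)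
        / qpoch (x * q%:C ^ (1 - n%:Z) / y) q%:C (m - j)) *
     (q%:C / y) ^+ j.
Proof.
move=> q_gt0 q_lt1 y_nz x_nz y_qpoch_nz C_nz.
have Q_nz : q%:C != 0 by rewrite fmorph_eq0 gt_eqF.
have Q_not_root1 k : q%:C ^+ k.+1 != 1.
  rewrite -rmorphXn -(rmorph1 (real_complex R)) (inj_eq (fmorph_inj _)).
  by rewrite lt_eqF // exprn_ilt1 ?ltW.
have Q_pow : q%:C ^ (1 - n%:Z) = q%:C / q%:C ^+ n by rewrite expfzDr // expr1z -exprnN.
rewrite Q_pow in C_nz *.
by rewrite phi21_termE // phi21_num_qpow // hqpochE // mulrAC.
Qed.
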